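(* Let $\gamma\ge2$. For every $G\in\mathcal S(\mathbb R)$, $$\lim_{n\to\infty}\frac{[\Theta(n)]^2}{n^2}\Big\{\sum_{x,y\in\mathbb Z}[G(\tfrac yn)-G(\tfrac xn)]^4p^2(y-x)+\sum_{x\in\mathbb Z}\Big[\sum_{y\in\mathbb Z}p(y-x)[G(\tfrac yn)-G(\tfrac xn)]^2\Big]^2\Big\}=0.$$
   Context: Let $p(0)=0$, $p(x)=c_\gamma|x|^{-\gamma-1}$ for $x\ne0$, with $c_\gamma$ the constant making $\sum_xp(x)=1$. $\Theta(n)=n^2$ if $\gamma>2$ and $\Theta(n)=n^2/\log n$ if $\gamma=2$. $\mathcal S(\mathbb R)$ is the Schwartz space. *)

From Stdlib Require Import Reals ZArith.
From Coquelicot Require Import Coquelicot.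
Open Scope R_scope.

(* Sum over Z of f : Z -> R, as sum over x >= 0 plus sum over x < 0.
   (Used only for nonnegative summands, where this is the unordered sum
   whenever it is finite.) *)
Definition zsum (f : Z -> R) : R :=
  Series (fun k : nat => f (Z.of_nat k)) + Series (fun k : nat => f (- Z.of_nat (S k))%Z).

Definition q_kernel (gamma : R) (x : Z) : R :=
  if Z.eq_dec x 0 then 0 else Rpower (Rabs (IZR x)) (- gamma - 1).

Definition c_gamma (gamma : R) : R := / zsum (q_kernel gamma).

Definition p_kernel (gamma : R) (x : Z) : R := c_gamma gamma * q_kernel gamma x.

Definition Theta (gamma : R) (n : nat) : R :=
  if Rgt_dec gamma 2 then INR n ^ 2 else INR n ^ 2 / ln (INR n).

Definition schwartz (G : R -> R) : Prop :=
  (forall (m : nat) (x : R), ex_derive_n G m x) /\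
  (forall k m : nat, exists C : R, forall x : R, Rabs (x ^ k * Derive_n G m x) <= C).

Definition A6_expr (gamma : R) (G : R -> R) (n : nat) : R :=
  let N := INR n in
  (Theta gamma n) ^ 2 / N ^ 2 *
  ( zsum (fun x => zsum (fun y =>
        (G (IZR y / N) - G (IZR x / N)) ^ 4 * (p_kernel gamma (y - x)) ^ 2))
  + zsum (fun x => (zsum (fun y =>
        p_kernel gamma (y - x) * (G (IZR y / N) - G (IZR x / N)) ^ 2)) ^ 2) ).

From Stdlib Require Import Reals ZArith Lra Lia.
From Coquelicot Require Import Coquelicot.
Open Scope R_scope.

(* A Schwartz function G satisfies (1 + |s|) |G t - G s| <= K |t - s| and
   |G t - G s| <= K.  With r = |y - x| and the weight w_x = N / (N + |x|), the
   increment |G (y/N) - G (x/N)| is therefore at most K w_x r / N, while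
   p (r) <= c r^-3 because gamma >= 2.  Summing over y, the quartic terms give
   O (w_x^2 / N^4) and the quadratic ones O (w_x log N / N^2), the logarithm
   coming from sum_r min (r^2 / N^2, r / N) r^-3.  Since sum_x w_x^2 = O (N),
   the bracket is O ((log N)^2 / N^3), whereas Theta(N)^2 / N^2 <= N^2, so the
   whole expression is O ((log N)^2 / N).  Every sum over Z has nonnegative
   terms and is bounded by telescoping: each term is dominated by an increment
   of a bounded potential. *)

Lemma sum_n_nonneg (a : nat -> R) (n : nat) :
  (forall k, 0 <= a k) -> 0 <= sum_n a n.
Proof.
  intros Ha; induction n as [|n IH].
  - rewrite sum_O; apply Ha.
  - rewrite sum_Sn; unfold plus; simpl; specialize (Ha (S n)); lra.
Qed.

Lemma sum_n_le_telescope (a g : nat -> R) (n : nat) :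
  (forall k, a k <= g (S k) - g k) -> sum_n a n <= g (S n) - g O.
Proof.
  intros Ha; induction n as [|n IH].
  - rewrite sum_O; apply Ha.
  - rewrite sum_Sn; unfold plus; simpl; specialize (Ha (S n)); lra.
Qed.

Lemma Series_nonneg (a : nat -> R) : (forall k, 0 <= a k) -> 0 <= Series a.
Proof.
  intros Ha; unfold Series.
  assert (H : Rbar_le (Lim_seq (fun _ => 0)) (Lim_seq (sum_n a))).
  { apply Lim_seq_le_loc; exists O; intros n _; apply sum_n_nonneg, Ha. }
  rewrite Lim_seq_const in H.
  destruct (Lim_seq (sum_n a)); simpl in *; try contradiction; lra.
Qed.

Lemma Series_le_of_sum_n_le (a : nat -> R) (M : R) :
  (forall k, 0 <= a k) -> (forall n, sum_n a n <= M) -> Series a <= M.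
Proof.
  intros Ha HM; unfold Series.
  assert (H0 : Rbar_le (Lim_seq (fun _ => 0)) (Lim_seq (sum_n a))).
  { apply Lim_seq_le_loc; exists O; intros n _; apply sum_n_nonneg, Ha. }
  assert (H1 : Rbar_le (Lim_seq (sum_n a)) (Lim_seq (fun _ => M))).
  { apply Lim_seq_le_loc; exists O; intros n _; apply HM. }
  rewrite !Lim_seq_const in *.
  destruct (Lim_seq (sum_n a)); simpl in *; try contradiction; lra.
Qed.

Lemma zsum_nonneg (w : Z -> R) : (forall z, 0 <= w z) -> 0 <= zsum w.
Proof.
  intros Hw; unfold zsum.
  pose proof (Series_nonneg (fun k => w (Z.of_nat k)) (fun k => Hw _)).
  pose proof (Series_nonneg (fun k => w (- Z.of_nat (S k))%Z) (fun k => Hw _)); lra.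
Qed.

Lemma zsum_le_oscillation (w phi : Z -> R) (lo hi : R) :
  (forall z, 0 <= w z) -> (forall z, w z <= phi (z + 1)%Z - phi z) ->
  (forall z, lo <= phi z <= hi) -> 0 <= zsum w <= hi - lo.
Proof.
  intros Hw Hstep Hphi; split; [apply zsum_nonneg, Hw|].
  assert (Hpos : Series (fun k => w (Z.of_nat k)) <= hi - phi 0%Z).
  { apply Series_le_of_sum_n_le; [intros; apply Hw|]; intros n.
    eapply Rle_trans.
    - apply (sum_n_le_telescope _ (fun k => phi (Z.of_nat k))); intros k.
      rewrite Nat2Z.inj_succ; apply Hstep.
    - cbv beta; change (Z.of_nat 0) with 0%Z.
      specialize (Hphi (Z.of_nat (S n))); lra. }
  assert (Hneg : Series (fun k => w (- Z.of_nat (S k))%Z) <= phi 0%Z - lo).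
  { apply Series_le_of_sum_n_le; [intros; apply Hw|]; intros n.
    eapply Rle_trans.
    - apply (sum_n_le_telescope _ (fun k => - phi (- Z.of_nat k)%Z)); intros k.
      specialize (Hstep (- Z.of_nat (S k))%Z).
      replace (- Z.of_nat (S k) + 1)%Z with (- Z.of_nat k)%Z in Hstep by lia; lra.
    - cbv beta; change (- Z.of_nat 0)%Z with 0%Z.
      specialize (Hphi (- Z.of_nat (S n))%Z); lra. }
  unfold zsum; lra.
Qed.

Definition has_potential (u : nat -> R) (D : R) : Prop :=
  (forall k, 0 <= u k) /\
  exists f : nat -> R, (forall k, u k <= f (S k) - f k) /\ (forall k, f k <= f O + D).

Section Reflected_potential.
Variables (u f : nat -> R) (D : R).
Hypothesis u_nonneg : forall k, 0 <= u k.
Hypothesis f_step : forall k, u k <= f (S k) - f k.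
Hypothesis f_le : forall k, f k <= f O + D.

Lemma potential_le (i j : nat) : (i <= j)%nat -> f i <= f j.
Proof.
  induction 1 as [|j _ IH]; [lra|].
  specialize (f_step j); specialize (u_nonneg j); lra.
Qed.

(* Reflecting f about -1/2 keeps every increment above u (|z|) without any
   monotonicity of u. *)
Definition zpotential (z : Z) : R :=
  if Z_lt_dec z 0 then f O + f 1%nat - f (Z.to_nat (1 - z)) else f (Z.to_nat z).

Lemma zpotential_step (z : Z) : u (Z.abs_nat z) <= zpotential (z + 1) - zpotential z.
Proof.
  unfold zpotential.
  destruct (Z_lt_dec (z + 1) 0), (Z_lt_dec z 0); try lia.
  - replace (Z.to_nat (1 - z)) with (S (Z.to_nat (1 - (z + 1)))) by lia.
    replace (Z.abs_nat z) with (Z.to_nat (1 - (z + 1))) by lia.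
    specialize (f_step (Z.to_nat (1 - (z + 1)))); lra.
  - replace z with (-1)%Z by lia.
    change (u 1%nat <= f 0%nat - (f 0%nat + f 1%nat - f 2%nat)).
    specialize (f_step 1%nat); lra.
  - replace (Z.to_nat (z + 1)) with (S (Z.to_nat z)) by lia.
    replace (Z.abs_nat z) with (Z.to_nat z) by lia; apply f_step.
Qed.

Lemma zpotential_range (z : Z) : f O - D <= zpotential z <= f O + D.
Proof.
  pose proof (potential_le 0 1 ltac:(lia)); pose proof (f_le 1%nat).
  unfold zpotential; destruct (Z_lt_dec z 0).
  - pose proof (potential_le 1 (Z.to_nat (1 - z)) ltac:(lia)).
    pose proof (f_le (Z.to_nat (1 - z))); lra.
  - pose proof (potential_le 0 (Z.to_nat z) ltac:(lia)).
    pose proof (f_le (Z.to_nat z)); lra.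
Qed.
End Reflected_potential.

Lemma zsum_le_potential (u : nat -> R) (D B : R) (x : Z) (w : Z -> R) :
  has_potential u D -> 0 <= B ->
  (forall y, 0 <= w y <= B * u (Z.abs_nat (y - x))) -> 0 <= zsum w <= 2 * B * D.
Proof.
  intros [Hu [f [Hstep Hf]]] HB Hw.
  replace (2 * B * D) with (B * (f O + D) - B * (f O - D)) by ring.
  apply zsum_le_oscillation with (phi := fun z => B * zpotential f (z - x)).
  - intros y; apply Hw.
  - intros y; replace (y + 1 - x)%Z with (y - x + 1)%Z by ring.
    pose proof (zpotential_step u f Hstep (y - x)); specialize (Hw y).
    rewrite <- Rmult_minus_distr_l; eapply Rle_trans; [apply Hw|].
    apply Rmult_le_compat_l; assumption.
  - intros y; destruct (zpotential_range u f D Hu Hstep Hf (y - x)).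
    split; apply Rmult_le_compat_l; assumption.
Qed.

Lemma inv_sq_potential (a : R) : 1 <= a ->
  has_potential (fun k => / (a + INR k) ^ 2) (/ (a - / 2)).
Proof.
  intros Ha; split.
  - intros k; pose proof (pos_INR k).
    apply Rlt_le, Rinv_0_lt_compat, pow_lt; lra.
  - exists (fun k => - / (a + INR k - / 2)); split.
    + intros k; rewrite S_INR; pose proof (pos_INR k).
      replace (- / (a + (INR k + 1) - / 2) - - / (a + INR k - / 2))
        with (/ ((a + INR k - / 2) * (a + INR k + / 2))) by (field; lra).
      apply Rinv_le_contravar; [apply Rmult_lt_0_compat; lra | nra].
    + intros k; simpl; pose proof (pos_INR k).
      assert (0 < / (a + INR k - / 2)) by (apply Rinv_0_lt_compat; lra).
      replace (a + 0 - / 2) with (a - / 2) by ring; lra.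
Qed.

Lemma ln_le_sub_1 (y : R) : 0 < y -> ln y <= y - 1.
Proof. intros Hy; pose proof (exp_ineq1_le (ln y)); rewrite exp_ln in H by lra; lra. Qed.

Lemma inv_harmonic_potential (N : R) : 4 <= N ->
  has_potential (fun k => / ((1 + INR k) * (N + INR k))) (4 / N * ln N).
Proof.
  intros HN; split.
  - intros k; pose proof (pos_INR k).
    apply Rlt_le, Rinv_0_lt_compat, Rmult_lt_0_compat; lra.
  - exists (fun k => 4 / N * (ln (1 + INR k) - ln (N + INR k))); split.
    + intros k; rewrite S_INR; pose proof (pos_INR k); set (x := INR k) in *.
      assert (Hlo : / (2 + x) <= ln (1 + (x + 1)) - ln (1 + x)).
      { pose proof (ln_le_sub_1 ((1 + x) / (1 + (x + 1)))) as H'.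
        rewrite ln_div in H' by lra.
        replace ((1 + x) / (1 + (x + 1)) - 1) with (- / (2 + x)) in H' by (field; lra).
        enough (0 < (1 + x) / (1 + (x + 1))) by (specialize (H' H0); lra).
        apply Rdiv_lt_0_compat; lra. }
      assert (Hhi : ln (N + (x + 1)) - ln (N + x) <= / (N + x)).
      { pose proof (ln_le_sub_1 ((N + (x + 1)) / (N + x))) as H'.
        rewrite ln_div in H' by lra.
        replace ((N + (x + 1)) / (N + x) - 1) with (/ (N + x)) in H' by (field; lra).
        apply H', Rdiv_lt_0_compat; lra. }
      apply Rle_trans with (4 / N * (/ (2 + x) - / (N + x))).
      * assert (E : 4 / N * (/ (2 + x) - / (N + x)) - / ((1 + x) * (N + x))
                    = (4 * (N - 2) * (1 + x) - N * (2 + x)) / (N * (1 + x) * (2 + x) * (N + x)))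
          by (field; lra).
        assert (0 <= (4 * (N - 2) * (1 + x) - N * (2 + x)) / (N * (1 + x) * (2 + x) * (N + x))).
        { apply Rdiv_le_0_compat; [nra|]. repeat apply Rmult_lt_0_compat; lra. }
        lra.
      * assert (0 < 4 / N) by (apply Rdiv_lt_0_compat; lra).
        rewrite <- Rmult_minus_distr_l; apply Rmult_le_compat_l; lra.
    + intros k; simpl; pose proof (pos_INR k).
      rewrite !Rplus_0_r, ln_1.
      assert (ln (1 + INR k) <= ln (N + INR k)) by (apply ln_le; lra).
      assert (0 < 4 / N) by (apply Rdiv_lt_0_compat; lra).
      nra.
Qed.

Lemma inv_sub_half_le (N : R) : 1 <= N -> / (N - / 2) <= 2 / N.
Proof.
  intros HN; replace (2 / N) with (/ (N / 2)) by (field; lra).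
  apply Rinv_le_contravar; lra.
Qed.

Lemma Rabs_IZR_abs_nat (z : Z) : Rabs (IZR z) = INR (Z.abs_nat z).
Proof. rewrite <- abs_IZR, INR_IZR_INZ, Nat2Z.inj_abs_nat; reflexivity. Qed.

Lemma INR_abs_nat_ge1 (z : Z) : z <> 0%Z -> 1 <= INR (Z.abs_nat z).
Proof. intros Hz; apply (le_INR 1); lia. Qed.

Lemma q_kernel_nonneg (gamma : R) (z : Z) : 0 <= q_kernel gamma z.
Proof.
  unfold q_kernel; destruct (Z.eq_dec z 0); [lra|].
  unfold Rpower; apply Rlt_le, exp_pos.
Qed.

Lemma q_kernel_le (gamma : R) (z : Z) : 2 <= gamma -> z <> 0%Z ->
  q_kernel gamma z <= / INR (Z.abs_nat z) ^ 3.
Proof.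
  intros Hg Hz; unfold q_kernel; destruct (Z.eq_dec z 0) as [|_]; [contradiction|].
  rewrite Rabs_IZR_abs_nat; pose proof (INR_abs_nat_ge1 z Hz).
  eapply Rle_trans; [apply (Rle_Rpower _ (- gamma - 1) (- INR 3)); simpl; lra|].
  rewrite Rpower_Ropp, Rpower_pow by lra; lra.
Qed.

Lemma c_gamma_nonneg (gamma : R) : 0 <= c_gamma gamma.
Proof.
  unfold c_gamma; pose proof (zsum_nonneg _ (q_kernel_nonneg gamma)) as H.
  destruct (Req_dec (zsum (q_kernel gamma)) 0) as [E|E].
  - rewrite E, Rinv_0; lra.
  - apply Rlt_le, Rinv_0_lt_compat; lra.
Qed.

Lemma p_kernel_0 (gamma : R) : p_kernel gamma 0 = 0.
Proof. unfold p_kernel, q_kernel; destruct (Z.eq_dec 0 0); [ring | contradiction]. Qed.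

Lemma p_kernel_nonneg (gamma : R) (z : Z) : 0 <= p_kernel gamma z.
Proof. apply Rmult_le_pos; [apply c_gamma_nonneg | apply q_kernel_nonneg]. Qed.

Lemma p_kernel_bounds (gamma : R) (z : Z) : 2 <= gamma -> z <> 0%Z ->
  0 <= p_kernel gamma z <= c_gamma gamma / INR (Z.abs_nat z) ^ 3.
Proof.
  intros Hg Hz; split; [apply p_kernel_nonneg|].
  apply Rmult_le_compat_l; [apply c_gamma_nonneg | apply q_kernel_le; assumption].
Qed.

Lemma schwartz_weighted_bound (G : R -> R) (m : nat) : schwartz G ->
  exists C, forall t, (1 + Rabs t) * Rabs (Derive_n G m t) <= C.
Proof.
  intros [_ Hb]; destruct (Hb 0%nat m) as [C0 H0], (Hb 1%nat m) as [C1 H1].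
  exists (C0 + C1); intros t; specialize (H0 t); specialize (H1 t); simpl in H0, H1.
  rewrite Rmult_1_l in H0; rewrite Rmult_1_r, Rabs_mult in H1; lra.
Qed.

Section Increments.
Variables (G : R -> R) (K : R).
Hypothesis G_derivable : forall t, ex_derive G t.
Hypothesis G_decay : forall t, (1 + Rabs t) * Rabs (G t) <= K.
Hypothesis G'_decay : forall t, (1 + Rabs t) * Rabs (Derive G t) <= K.

Lemma Rabs_G_le (t : R) : Rabs (G t) <= K.
Proof. specialize (G_decay t); pose proof (Rabs_pos t); pose proof (Rabs_pos (G t)); nra. Qed.

Lemma G_increment_bounded (s t : R) : Rabs (G t - G s) <= 2 * K.
Proof.
  pose proof (Rabs_G_le s); pose proof (Rabs_G_le t).
  pose proof (Rabs_triang (G t) (- G s)); rewrite Rabs_Ropp in *; unfold Rminus; lra.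
Qed.

Lemma G_increment_near (s t : R) : Rabs (t - s) <= 1 ->
  (1 + Rabs s) * Rabs (G t - G s) <= 2 * K * Rabs (t - s).
Proof.
  intros Hts.
  destruct (MVT_gen G s t (Derive G)) as [c [Hc ->]].
  - intros x _; apply Derive_correct, G_derivable.
  - intros x _; apply continuity_pt_filterlim.
    apply (ex_derive_continuous (K := R_AbsRing) (V := R_NormedModule)), G_derivable.
  - assert (Hs : 1 + Rabs s <= 2 * (1 + Rabs c)).
    { assert (Hcs : Rabs (s - c) <= 1).
      { unfold Rmin, Rmax in Hc; destruct (Rle_dec s t);
          unfold Rabs in *; repeat destruct Rcase_abs; lra. }
      pose proof (Rabs_triang_inv s c); pose proof (Rabs_pos c); lra. }
    rewrite Rabs_mult; specialize (G'_decay c).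
    pose proof (Rabs_pos (Derive G c)); pose proof (Rabs_pos (t - s)).
    assert ((1 + Rabs s) * Rabs (Derive G c) <= 2 * K) by nra.
    nra.
Qed.

Lemma G_increment_far (s t : R) : 1 < Rabs (t - s) ->
  (1 + Rabs s) * Rabs (G t - G s) <= 3 * K * Rabs (t - s).
Proof.
  intros Hts.
  assert (Hs : 1 + Rabs s <= (1 + Rabs t) * (2 * Rabs (t - s))).
  { pose proof (Rabs_triang_inv s t) as Hst; rewrite Rabs_minus_sym in Hst.
    pose proof (Rabs_pos t); nra. }
  pose proof (G_decay t); pose proof (G_decay s).
  pose proof (Rabs_pos (G t)); pose proof (Rabs_pos (G s)); pose proof (Rabs_pos s).
  pose proof (Rabs_triang (G t) (- G s)); rewrite Rabs_Ropp in *; fold (G t - G s) in *.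
  assert ((1 + Rabs s) * Rabs (G t) <= 2 * K * Rabs (t - s)).
  { apply Rle_trans with ((1 + Rabs t) * Rabs (G t) * (2 * Rabs (t - s))); [nra|].
    pose proof (Rmult_le_compat_r (2 * Rabs (t - s)) _ _ ltac:(lra) H); lra. }
  assert (0 <= K) by (pose proof (Rabs_pos t); nra).
  assert ((1 + Rabs s) * Rabs (G s) <= K * Rabs (t - s)) by nra.
  nra.
Qed.
End Increments.

Lemma schwartz_increment_bounds (G : R -> R) : schwartz G ->
  exists K, (forall s t, (1 + Rabs s) * Rabs (G t - G s) <= K * Rabs (t - s)) /\
            (forall s t, Rabs (G t - G s) <= K).
Proof.
  intros HG.
  destruct (schwartz_weighted_bound G 0 HG) as [C0 H0].
  destruct (schwartz_weighted_bound G 1 HG) as [C1 H1]; simpl in H0, H1.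
  set (K := Rmax C0 C1).
  assert (HK0 : forall t, (1 + Rabs t) * Rabs (G t) <= K)
    by (intros t; eapply Rle_trans; [apply H0 | apply Rmax_l]).
  assert (HK1 : forall t, (1 + Rabs t) * Rabs (Derive G t) <= K)
    by (intros t; eapply Rle_trans; [apply H1 | apply Rmax_r]).
  assert (Hd : forall t, ex_derive G t) by (intros t; apply (proj1 HG 1%nat t)).
  assert (HK : 0 <= K) by (eapply Rle_trans; [apply Rabs_pos | apply (Rabs_G_le G K HK0 0)]).
  exists (3 * K); split.
  - intros s t; destruct (Rle_lt_dec (Rabs (t - s)) 1) as [Hnear|Hfar].
    + pose proof (G_increment_near G K Hd HK1 s t Hnear); pose proof (Rabs_pos (t - s)); nra.
    + apply (G_increment_far G K HK0 s t Hfar).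
  - intros s t; pose proof (G_increment_bounded G K HK0 s t); lra.
Qed.

Lemma quartic_term_le (d p a c r : R) :
  0 <= d <= a * r -> 0 <= p <= c / r ^ 3 -> 1 <= r ->
  d ^ 4 * p ^ 2 <= 4 * a ^ 4 * c ^ 2 / (1 + r) ^ 2.
Proof.
  intros [Hd0 Hd] [Hp0 Hp] Hr.
  assert (Hr2 : / r ^ 2 <= 4 / (1 + r) ^ 2).
  { replace (4 / (1 + r) ^ 2) with (/ ((1 + r) ^ 2 / 4)) by (field; lra).
    apply Rinv_le_contravar; [apply Rdiv_lt_0_compat; [apply pow_lt|]; lra | nra]. }
  apply Rle_trans with ((a * r) ^ 4 * (c / r ^ 3) ^ 2).
  { apply Rmult_le_compat; try (apply pow_le; lra); apply pow_incr; lra. }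
  replace ((a * r) ^ 4 * (c / r ^ 3) ^ 2) with (a ^ 4 * c ^ 2 * / r ^ 2) by (field; lra).
  replace (4 * a ^ 4 * c ^ 2 / (1 + r) ^ 2) with (a ^ 4 * c ^ 2 * (4 / (1 + r) ^ 2))
    by (field; lra).
  apply Rmult_le_compat_l; [|exact Hr2].
  replace (a ^ 4) with ((a ^ 2) ^ 2) by ring; apply Rmult_le_pos; apply pow2_ge_0.
Qed.

Lemma quadratic_term_le (d p a b c r M : R) :
  0 <= d <= a * r -> d <= b -> 0 <= p <= c / r ^ 3 -> 1 <= r -> 0 < M ->
  p * d ^ 2 <= 2 * a * c * (M * a + b) / ((1 + r) * (M + r)).
Proof.
  intros [Hd0 Hd] Hdb [Hp0 Hp] Hr HM.
  assert (Hr3 : 0 < r ^ 3) by (apply pow_lt; lra).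
  assert (Ha : 0 <= a) by nra.
  assert (Hc : 0 <= c).
  { replace c with (c / r ^ 3 * r ^ 3) by (field; lra); apply Rmult_le_pos; lra. }
  assert (Hca : 0 <= c * a / r ^ 2) by (apply Rdiv_le_0_compat; [nra | apply pow_lt; lra]).
  assert (H1 : p * d ^ 2 <= c * a / r ^ 2 * d).
  { apply Rle_trans with (c / r ^ 3 * (a * r) * d).
    - replace (p * d ^ 2) with (p * d * d) by ring.
      apply Rmult_le_compat_r; [lra|]; apply Rmult_le_compat; lra.
    - right; field; lra. }
  assert (H2 : (1 + r) * (M + r) * d <= 2 * r ^ 2 * (M * a + b)).
  { assert (M * d <= M * (a * r)) by (apply Rmult_le_compat_l; lra).
    assert (r * d <= r * b) by (apply Rmult_le_compat_l; lra).
    assert (HMr : 0 <= (M + r) * d <= r * (M * a + b)) by (split; [apply Rmult_le_pos|]; lra).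
    apply Rle_trans with (2 * r * ((M + r) * d)).
    - rewrite Rmult_assoc; apply Rmult_le_compat_r; lra.
    - replace (2 * r ^ 2 * (M * a + b)) with (2 * r * (r * (M * a + b))) by ring.
      apply Rmult_le_compat_l; lra. }
  apply (Rmult_le_reg_r ((1 + r) * (M + r))); [apply Rmult_lt_0_compat; lra|].
  replace (2 * a * c * (M * a + b) / ((1 + r) * (M + r)) * ((1 + r) * (M + r)))
    with (c * a / r ^ 2 * (2 * r ^ 2 * (M * a + b))) by (field; lra).
  apply Rle_trans with (c * a / r ^ 2 * ((1 + r) * (M + r) * d)).
  - replace (c * a / r ^ 2 * ((1 + r) * (M + r) * d))
      with (c * a / r ^ 2 * d * ((1 + r) * (M + r))) by ring.
    apply Rmult_le_compat_r; [apply Rmult_le_pos|]; lra.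
  - apply Rmult_le_compat_l; assumption.
Qed.

Lemma pow4_abs (x : R) : Rabs x ^ 4 = x ^ 4.
Proof. replace 4%nat with (2 * 2)%nat by reflexivity; rewrite !pow_mult, pow2_abs; reflexivity. Qed.

Definition quartic_sum (gamma : R) (G : R -> R) (N : R) (x : Z) : R :=
  zsum (fun y => (G (IZR y / N) - G (IZR x / N)) ^ 4 * p_kernel gamma (y - x) ^ 2).

Definition quadratic_sum (gamma : R) (G : R -> R) (N : R) (x : Z) : R :=
  zsum (fun y => p_kernel gamma (y - x) * (G (IZR y / N) - G (IZR x / N)) ^ 2).

Lemma A6_expr_eq (gamma : R) (G : R -> R) (n : nat) :
  A6_expr gamma G n = Theta gamma n ^ 2 / INR n ^ 2 *
    (zsum (quartic_sum gamma G (INR n)) + zsum (fun x => quadratic_sum gamma G (INR n) x ^ 2)).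
Proof. reflexivity. Qed.

Section Estimates.
Variables (gamma K N : R) (G : R -> R).
Hypothesis gamma_ge2 : 2 <= gamma.
Hypothesis N_ge4 : 4 <= N.
Hypothesis G_incr_weighted : forall s t, (1 + Rabs s) * Rabs (G t - G s) <= K * Rabs (t - s).
Hypothesis G_incr_bounded : forall s t, Rabs (G t - G s) <= K.

Let c := c_gamma gamma.
Let c_nonneg : 0 <= c := c_gamma_nonneg gamma.

Definition weight (x : Z) : R := N / (N + INR (Z.abs_nat x)).

Lemma weight_range (x : Z) : 0 < weight x <= 1.
Proof.
  unfold weight; pose proof (pos_INR (Z.abs_nat x)); split.
  - apply Rdiv_lt_0_compat; lra.
  - apply Rmult_le_reg_r with (N + INR (Z.abs_nat x)); [lra|].
    unfold Rdiv; rewrite Rmult_assoc, Rinv_l; lra.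
Qed.

Lemma K_nonneg : 0 <= K.
Proof. eapply Rle_trans; [apply Rabs_pos | apply (G_incr_bounded 0 0)]. Qed.

Definition slope (x : Z) : R := K * weight x / N.

Lemma slope_nonneg (x : Z) : 0 <= slope x.
Proof.
  pose proof (weight_range x); pose proof K_nonneg.
  apply Rdiv_le_0_compat; [apply Rmult_le_pos|]; lra.
Qed.

Lemma G_diff_le (x y : Z) :
  Rabs (G (IZR y / N) - G (IZR x / N)) <= slope x * INR (Z.abs_nat (y - x)).
Proof.
  pose proof (G_incr_weighted (IZR x / N) (IZR y / N)) as H.
  replace (IZR y / N - IZR x / N) with (IZR (y - x) / N) in H by (rewrite minus_IZR; field; lra).
  rewrite !Rabs_div, (Rabs_right N), !Rabs_IZR_abs_nat in H by lra.
  unfold slope, weight; pose proof (pos_INR (Z.abs_nat x)).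
  set (d := Rabs (G (IZR y / N) - G (IZR x / N))) in *.
  set (a := INR (Z.abs_nat x)) in *; set (r := INR (Z.abs_nat (y - x))) in *.
  apply (Rmult_le_reg_l ((N + a) / N)); [apply Rdiv_lt_0_compat; lra|].
  replace ((N + a) / N * (K * (N / (N + a)) / N * r)) with (K * (r / N)) by (field; lra).
  replace ((N + a) / N) with (1 + a / N) by (field; lra); exact H.
Qed.

Lemma quartic_coef_nonneg (x : Z) : 0 <= 4 * slope x ^ 4 * c ^ 2.
Proof.
  replace (slope x ^ 4) with ((slope x ^ 2) ^ 2) by ring.
  apply Rmult_le_pos; [apply Rmult_le_pos; [lra|]|]; apply pow2_ge_0.
Qed.

Lemma quadratic_coef_nonneg (x : Z) : 0 <= 2 * slope x * c * (N * slope x + K).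
Proof.
  pose proof (slope_nonneg x); pose proof K_nonneg.
  assert (0 <= N * slope x + K) by nra.
  apply Rmult_le_pos; [apply Rmult_le_pos; [apply Rmult_le_pos|]|]; lra.
Qed.

Lemma quartic_summand_le (x y : Z) :
  0 <= (G (IZR y / N) - G (IZR x / N)) ^ 4 * p_kernel gamma (y - x) ^ 2
    <= 4 * slope x ^ 4 * c ^ 2 * / (1 + INR (Z.abs_nat (y - x))) ^ 2.
Proof.
  split.
  - apply Rmult_le_pos; [rewrite <- pow4_abs; apply pow_le, Rabs_pos | apply pow2_ge_0].
  - destruct (Z.eq_dec (y - x) 0) as [E|E].
    + rewrite E, p_kernel_0, pow_i, Rmult_0_r by lia.
      pose proof (pos_INR (Z.abs_nat 0)).
      apply Rmult_le_pos; [apply quartic_coef_nonneg|].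
      apply Rlt_le, Rinv_0_lt_compat, pow_lt; lra.
    + rewrite <- pow4_abs; apply quartic_term_le.
      * split; [apply Rabs_pos | apply G_diff_le].
      * apply (p_kernel_bounds gamma _ gamma_ge2 E).
      * apply (INR_abs_nat_ge1 _ E).
Qed.

Lemma quartic_sum_le (x : Z) :
  0 <= quartic_sum gamma G N x <= 16 * c ^ 2 * K ^ 4 / N ^ 2 * / (N + INR (Z.abs_nat x)) ^ 2.
Proof.
  pose proof (weight_range x) as Hw; pose proof (pos_INR (Z.abs_nat x)).
  set (B := 4 * slope x ^ 4 * c ^ 2).
  assert (HB : 0 <= B) by apply quartic_coef_nonneg.
  enough (Hsum : 0 <= quartic_sum gamma G N x <= 2 * B * / (1 - / 2)).
  { split; [lra|]; eapply Rle_trans; [apply Hsum|].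
    replace (16 * c ^ 2 * K ^ 4 / N ^ 2 * / (N + INR (Z.abs_nat x)) ^ 2)
      with (16 * c ^ 2 * K ^ 4 / N ^ 4 * weight x ^ 2) by (unfold weight; field; lra).
    replace (2 * B * / (1 - / 2)) with (16 * c ^ 2 * K ^ 4 / N ^ 4 * weight x ^ 4)
      by (unfold B, slope; field; lra).
    apply Rmult_le_compat_l.
    - apply Rdiv_le_0_compat; [|apply pow_lt; lra].
      replace (K ^ 4) with ((K ^ 2) ^ 2) by ring.
      apply Rmult_le_pos; [apply Rmult_le_pos; [lra|]|]; apply pow2_ge_0.
    - assert (0 <= weight x ^ 2 <= 1) by (split; [apply pow2_ge_0 | nra]).
      replace (weight x ^ 4) with (weight x ^ 2 * weight x ^ 2) by ring; nra. }
  apply zsum_le_potential with (u := fun k => / (1 + INR k) ^ 2) (x := x);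
    [apply inv_sq_potential; lra | exact HB | apply quartic_summand_le].
Qed.

Lemma quadratic_summand_le (x y : Z) :
  0 <= p_kernel gamma (y - x) * (G (IZR y / N) - G (IZR x / N)) ^ 2
    <= 2 * slope x * c * (N * slope x + K)
       * / ((1 + INR (Z.abs_nat (y - x))) * (N + INR (Z.abs_nat (y - x)))).
Proof.
  split; [apply Rmult_le_pos; [apply p_kernel_nonneg | apply pow2_ge_0]|].
  destruct (Z.eq_dec (y - x) 0) as [E|E].
  - rewrite E, p_kernel_0, Rmult_0_l.
    pose proof (pos_INR (Z.abs_nat 0)).
    apply Rmult_le_pos; [apply quadratic_coef_nonneg|].
    apply Rlt_le, Rinv_0_lt_compat, Rmult_lt_0_compat; lra.
  - rewrite <- pow2_abs; apply quadratic_term_le.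
    + split; [apply Rabs_pos | apply G_diff_le].
    + apply G_incr_bounded.
    + apply (p_kernel_bounds gamma _ gamma_ge2 E).
    + apply (INR_abs_nat_ge1 _ E).
    + lra.
Qed.

Lemma quadratic_sum_le (x : Z) :
  0 <= quadratic_sum gamma G N x <= 32 * c * K ^ 2 * ln N / N ^ 2 * weight x.
Proof.
  pose proof (weight_range x) as Hw; pose proof K_nonneg as HK.
  assert (HlnN : 0 <= ln N) by (rewrite <- ln_1; apply ln_le; lra).
  set (B := 2 * slope x * c * (N * slope x + K)).
  assert (HB : 0 <= B) by apply quadratic_coef_nonneg.
  enough (Hsum : 0 <= quadratic_sum gamma G N x <= 2 * B * (4 / N * ln N)).
  { split; [lra|]; eapply Rle_trans; [apply Hsum|].
    replace (2 * B * (4 / N * ln N))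
      with (16 * c * K * ln N * weight x / N ^ 2 * (K * weight x + K))
      by (unfold B, slope; field; lra).
    replace (32 * c * K ^ 2 * ln N / N ^ 2 * weight x)
      with (16 * c * K * ln N * weight x / N ^ 2 * (2 * K)) by (field; lra).
    apply Rmult_le_compat_l; [|nra].
    apply Rdiv_le_0_compat; [|apply pow_lt; lra].
    assert (0 <= c * K * ln N) by (apply Rmult_le_pos; [apply Rmult_le_pos|]; lra).
    nra. }
  apply zsum_le_potential with (u := fun k => / ((1 + INR k) * (N + INR k))) (x := x);
    [apply inv_harmonic_potential; lra | exact HB | apply quadratic_summand_le].
Qed.

Lemma quartic_total_le : 0 <= zsum (quartic_sum gamma G N) <= 64 * c ^ 2 * K ^ 4 / N ^ 3.
Proof.
  pose proof K_nonneg as HK.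
  set (B := 16 * c ^ 2 * K ^ 4 / N ^ 2).
  assert (HB : 0 <= B).
  { apply Rdiv_le_0_compat; [|apply pow_lt; lra].
    replace (K ^ 4) with ((K ^ 2) ^ 2) by ring.
    apply Rmult_le_pos; [apply Rmult_le_pos; [lra|]|]; apply pow2_ge_0. }
  enough (Hsum : 0 <= zsum (quartic_sum gamma G N) <= 2 * B * / (N - / 2)).
  { split; [lra|]; eapply Rle_trans; [apply Hsum|].
    replace (64 * c ^ 2 * K ^ 4 / N ^ 3) with (2 * B * (2 / N)) by (unfold B; field; lra).
    apply Rmult_le_compat_l; [lra | apply inv_sub_half_le; lra]. }
  apply zsum_le_potential with (u := fun k => / (N + INR k) ^ 2) (x := 0%Z);
    [apply inv_sq_potential; lra | exact HB |].
  intros x; rewrite Z.sub_0_r; apply quartic_sum_le.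
Qed.

Lemma quadratic_total_le :
  0 <= zsum (fun x => quadratic_sum gamma G N x ^ 2) <= 4096 * c ^ 2 * K ^ 4 * ln N ^ 2 / N ^ 3.
Proof.
  set (B := (32 * c * K ^ 2 * ln N) ^ 2 / N ^ 2).
  assert (HB : 0 <= B) by (apply Rdiv_le_0_compat; [apply pow2_ge_0 | apply pow_lt; lra]).
  enough (Hsum : 0 <= zsum (fun x => quadratic_sum gamma G N x ^ 2) <= 2 * B * / (N - / 2)).
  { split; [lra|]; eapply Rle_trans; [apply Hsum|].
    replace (4096 * c ^ 2 * K ^ 4 * ln N ^ 2 / N ^ 3) with (2 * B * (2 / N))
      by (unfold B; field; lra).
    apply Rmult_le_compat_l; [lra | apply inv_sub_half_le; lra]. }
  apply zsum_le_potential with (u := fun k => / (N + INR k) ^ 2) (x := 0%Z);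
    [apply inv_sq_potential; lra | exact HB |].
  intros x; rewrite Z.sub_0_r; split; [apply pow2_ge_0|].
  pose proof (pos_INR (Z.abs_nat x)).
  replace (B * / (N + INR (Z.abs_nat x)) ^ 2)
    with ((32 * c * K ^ 2 * ln N / N ^ 2 * weight x) ^ 2) by (unfold B, weight; field; lra).
  apply pow_incr, quadratic_sum_le.
Qed.
End Estimates.

Lemma ln_ge_1 (N : R) : 3 <= N -> 1 <= ln N.
Proof.
  intros HN; rewrite <- (ln_exp 1) at 1.
  apply ln_le; [apply exp_pos | pose proof exp_le_3; lra].
Qed.

Lemma Theta_sq_div_le (gamma : R) (n : nat) : 4 <= INR n ->
  0 <= Theta gamma n ^ 2 / INR n ^ 2 <= INR n ^ 2.
Proof.
  intros Hn; unfold Theta; set (N := INR n) in *.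
  assert (HN2 : 0 < N ^ 2) by (apply pow_lt; lra).
  split; [apply Rdiv_le_0_compat; [apply pow2_ge_0 | exact HN2]|].
  destruct (Rgt_dec gamma 2).
  - right; field; lra.
  - pose proof (ln_ge_1 N ltac:(lra)) as Hl.
    replace ((N ^ 2 / ln N) ^ 2 / N ^ 2) with (N ^ 2 * / ln N ^ 2) by (field; lra).
    rewrite <- (Rmult_1_r (N ^ 2)) at 2.
    apply Rmult_le_compat_l; [lra|].
    rewrite <- Rinv_1; apply Rinv_le_contravar; [lra | nra].
Qed.

Lemma A6_expr_le (gamma K : R) (G : R -> R) (n : nat) :
  2 <= gamma ->
  (forall s t, (1 + Rabs s) * Rabs (G t - G s) <= K * Rabs (t - s)) ->
  (forall s t, Rabs (G t - G s) <= K) ->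
  4 <= INR n ->
  0 <= A6_expr gamma G n <= 4160 * c_gamma gamma ^ 2 * K ^ 4 * (ln (INR n) ^ 2 / INR n).
Proof.
  intros Hg Hw Hb Hn; rewrite A6_expr_eq; set (N := INR n) in *.
  destruct (Theta_sq_div_le gamma n Hn) as [Ht0 Ht1]; fold N in Ht0, Ht1.
  destruct (quartic_total_le gamma K N G Hg Hn Hw Hb) as [H10 H11].
  destruct (quadratic_total_le gamma K N G Hg Hn Hw Hb) as [H20 H21].
  pose proof (ln_ge_1 N ltac:(lra)) as Hl.
  set (C := c_gamma gamma ^ 2 * K ^ 4).
  assert (HC : 0 <= C).
  { unfold C; replace (K ^ 4) with ((K ^ 2) ^ 2) by ring.
    apply Rmult_le_pos; apply pow2_ge_0. }
  assert (Hsum : zsum (quartic_sum gamma G N) + zsum (fun x => quadratic_sum gamma G N x ^ 2)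
                 <= 4160 * C * ln N ^ 2 / N ^ 3).
  { replace (64 * c_gamma gamma ^ 2 * K ^ 4 / N ^ 3) with (64 * C / N ^ 3) in H11
      by (unfold C; field; lra).
    replace (4096 * c_gamma gamma ^ 2 * K ^ 4 * ln N ^ 2 / N ^ 3)
      with (4096 * C * ln N ^ 2 / N ^ 3) in H21 by (unfold C; field; lra).
    assert (64 * C / N ^ 3 <= 64 * C * ln N ^ 2 / N ^ 3).
    { unfold Rdiv; apply Rmult_le_compat_r; [apply Rlt_le, Rinv_0_lt_compat, pow_lt; lra|].
      rewrite <- (Rmult_1_r (64 * C)) at 1; apply Rmult_le_compat_l; nra. }
    lra. }
  split; [apply Rmult_le_pos; lra|].
  apply Rle_trans with (N ^ 2 * (4160 * C * ln N ^ 2 / N ^ 3)).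
  - apply Rmult_le_compat; lra.
  - right; unfold C; field; lra.
Qed.

Lemma is_lim_seq_ln_sq_div : is_lim_seq (fun n => ln (INR n) ^ 2 / INR n) 0.
Proof.
  set (h := fun y => ln y / y).
  assert (Hh : is_lim_seq (fun n => h (sqrt (INR n))) 0).
  { apply (is_lim_comp_seq h (fun n => sqrt (INR n)) p_infty 0 is_lim_div_ln_p).
    - exists O; intros n _; discriminate.
    - apply (is_lim_comp_seq sqrt INR p_infty p_infty).
      + apply (is_lim_sqrt_p (fun y => y)), is_lim_id.
      + exists O; intros n _; discriminate.
      + apply is_lim_seq_INR. }
  apply is_lim_seq_ext_loc with (fun n => 4 * (h (sqrt (INR n)) * h (sqrt (INR n)))).
  - exists 1%nat; intros n Hn.
    assert (HN : 0 < INR n) by (apply lt_0_INR; lia).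
    assert (Hs : sqrt (INR n) * sqrt (INR n) = INR n) by (apply sqrt_sqrt; lra).
    assert (Hsp : 0 < sqrt (INR n)) by (apply sqrt_lt_R0; lra).
    assert (Hln : ln (INR n) = 2 * ln (sqrt (INR n)))
      by (rewrite <- Hs at 1; rewrite ln_mult by lra; ring).
    unfold h; rewrite Hln; set (s := sqrt (INR n)) in *; rewrite <- Hs; field; lra.
  - replace (Finite 0) with (Rbar_mult 4 (Rbar_mult 0 0)) by (simpl; f_equal; ring).
    apply is_lim_seq_scal_l, is_lim_seq_mult'; assumption.
Qed.

Theorem propositionA6 (gamma : R) (hgamma : 2 <= gamma) (G : R -> R)
  (hG : schwartz G) :
  is_lim_seq (fun n : nat => A6_expr gamma G n) 0.
Proof.
  destruct (schwartz_increment_bounds G hG) as [K [Hw Hb]].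
  set (C := 4160 * c_gamma gamma ^ 2 * K ^ 4).
  apply is_lim_seq_le_le_loc with (u := fun _ => 0) (w := fun n => C * (ln (INR n) ^ 2 / INR n)).
  - exists 4%nat; intros n Hn.
    apply (A6_expr_le gamma K G n hgamma Hw Hb).
    replace 4 with (INR 4) by (simpl; ring); apply le_INR; lia.
  - apply is_lim_seq_const.
  - replace (Finite 0) with (Rbar_mult C 0) by (simpl; f_equal; ring).
    apply is_lim_seq_scal_l, is_lim_seq_ln_sq_div.
Qed.
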